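(* Let $n\geq 3$ be an integer and put $m=2^{n-1}$. Let $G_2(n)=\{0,1,\dots,2^n-1\}$ with the binary operation $\oplus$, and let $\mathrm{gyr}\colon G_2(n)\times G_2(n)\to \mathrm{Aut}(G_2(n),\oplus)$ be the map, all as defined in the context below. Then $(G_2(n),\oplus)$ is a gyrogroup with gyroautomorphisms given by $\mathrm{gyr}$; that is, $0\oplus x=x$ for all $x$, every element has a left inverse with respect to $0$, $a\oplus(b\oplus c)=(a\oplus b)\oplus \mathrm{gyr}[a,b](c)$ for all $a,b,c\in G_2(n)$, and $\mathrm{gyr}[a,b]=\mathrm{gyr}[a\oplus b,b]$ for all $a,b\in G_2(n)$.
   Context: A groupoid $(G,\oplus)$ is a gyrogroup if: (G1) there is $0\in G$ with $0\oplus x=x$ for all $x$; (G2) for each $a\in G$ there is $b\in G$ with $b\oplus a=0$; (G3) there is a function $\mathrm{gyr}\colon G\times G\to\mathrm{Aut}(G,\oplus)$ (automorphisms = bijections preserving $\oplus$) such that $a\oplus(b\oplus c)=(a\oplus b)\oplus\mathrm{gyr}[a,b](c)$ for all $a,b,c$; (G4) $\mathrm{gyr}[a,b]=\mathrm{gyr}[a\oplus b,b]$ for all $a,b$. Setup: $n\ge 3$, $m=2^{n-1}$, $G_2(n)=\{0,1,\dots,2^n-1\}$, $P(n)=\{0,\dots,m-1\}$, $H(n)=\{m,\dots,2^n-1\}$; $O_P,E_P$ are the odd/even elements of $P(n)$, $O_H,E_H$ the odd/even elements of $H(n)$. For $i,j\in G_2(n)$ let $t,s\in P(n)$ with $t\equiv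 i+j\pmod m$, $s\equiv i+j+\frac m2\pmod m$, and set $i\oplus j=t$ if $(i,j)\in (P(n)\times P(n))\cup\big[(H(n)\times H(n))\setminus(E_H\times O_H)\big]$; $i\oplus j=t+m$ if $(i,j)\in (P(n)\times H(n))\cup\big[(H(n)\times P(n))\setminus(E_H\times O_P)\big]$; $i\oplus j=s$ if $(i,j)\in E_H\times O_H$; $i\oplus j=s+m$ if $(i,j)\in E_H\times O_P$. Let $A\colon G_2(n)\to G_2(n)$ be $A(i)=r$ if $i\in O_P$, $A(i)=r+m$ if $i\in O_H$, $A(i)=i$ otherwise, where $r\in P(n)$, $r\equiv i+\frac m2\pmod m$ ($A$ is an automorphism of $(G_2(n),\oplus)$). Let $M=[O_P\times(O_H\cup E_H)]\cup[O_H\times(O_P\cup E_H)]\cup[E_H\times(O_P\cup O_H)]$, and define $\mathrm{gyr}[a,b]=A$ if $(a,b)\in M$ and $\mathrm{gyr}[a,b]=I$ (the identity map) otherwise. *)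

From mathcomp Require Import all_boot.
Set Implicit Arguments. Unset Strict Implicit. Unset Printing Implicit Defensive.

Section G2.
Variable n : nat.

Definition mm : nat := 2 ^ n.-1.
Definition inG (i : nat) : bool := i < 2 ^ n.
Definition inP (i : nat) : bool := i < mm.
Definition inH (i : nat) : bool := (mm <= i) && (i < 2 ^ n).
Definition inOP (i : nat) : bool := inP i && odd i.
Definition inEP (i : nat) : bool := inP i && ~~ odd i.
Definition inOH (i : nat) : bool := inH i && odd i.
Definition inEH (i : nat) : bool := inH i && ~~ odd i.

Definition tt (i j : nat) : nat := (i + j) %% mm.
Definition ss (i j : nat) : nat := (i + j + mm %/ 2) %% mm.

Definition oplus (i j : nat) : nat :=
  if inEH i && inOH j then ss i j
  else if inEH i && inOP j then ss i j + mm
  else if (inP i && inP j) || (inH i && inH j) then tt i j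
  else tt i j + mm.

Definition Amap (i : nat) : nat :=
  if inOP i then (i + mm %/ 2) %% mm
  else if inOH i then (i + mm %/ 2) %% mm + mm
  else i.

Definition inM (a b : nat) : bool :=
  [|| inOP a && (inOH b || inEH b),
      inOH a && (inOP b || inEH b)
    | inEH a && (inOP b || inOH b)].

Definition gyr (a b : nat) : nat -> nat := if inM a b then Amap else id.

Definition is_aut (f : nat -> nat) : Prop :=
  [/\ (forall x, inG x -> inG (f x)),
      (forall x y, inG x -> inG y -> f x = f y -> x = y),
      (forall y, inG y -> exists2 x, inG x & f x = y)
    & (forall x y, inG x -> inG y -> f (oplus x y) = oplus (f x) (f y))].

End G2.

From mathcomp Require Import all_boot ssralg zmodp.
Set Implicit Arguments. Unset Strict Implicit. Unset Printing Implicit Defensive.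
Import GRing.Theory.

(* Writing x = h m + r with h = [m <= x] and r = x mod m identifies G_2(n) with
   Z/2 x Z/m, and x (+) y becomes the twisted sum
     (h, r) (+) (h', r') = (h + h', r + r' + tau (m/2)),
   tau = [h = 1, r even, r' odd], while the automorphism A adds m/2 to odd
   residues.  As n >= 3, m/2 is even and has order 2 in Z/m, so parities add and
   only tau mod 2 matters: the gyroassociative law reduces to a cocycle identity
   for tau (twist_cocycle), and every other axiom to a similar check on the
   bits h and odd r. *)

Section G2Gyrogroup.
Variable n : nat.
Hypothesis n_ge3 : 3 <= n.

Local Notation m := (mm n).
Local Notation k := (mm n %/ 2).

Lemma mm_halfE : m = k * 2.
Proof.
rewrite /mm; case: n n_ge3 => [|[|[|p]]] // _ /=.
by rewrite [2 ^ _.+2]expnS mulKn // mulnC.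
Qed.

Lemma odd_half_mm : odd k = false.
Proof.
rewrite /mm; case: n n_ge3 => [|[|[|p]]] // _ /=.
by rewrite [2 ^ _.+2]expnS mulKn // oddX.
Qed.

Lemma odd_mm : odd m = false.
Proof. by rewrite mm_halfE oddM andbF. Qed.

Lemma mm_gt1 : 1 < m.
Proof. by rewrite /mm; case: n n_ge3 => [|[|p]] // _; rewrite -[1]/(2 ^ 0) ltn_exp2l. Qed.

Lemma mm_gt0 : 0 < m.
Proof. exact: ltnW mm_gt1. Qed.

Lemma expn_mmE : 2 ^ n = m * 2.
Proof. by rewrite /mm; case: n n_ge3 => // p _; rewrite expnS mulnC. Qed.

Definition hi (x : nat) : bool := m <= x.
Definition pack (h : bool) (r : nat) : nat := h * m + r %% m.

Lemma pack_in h r : inG n (pack h r).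
Proof.
rewrite /inG /pack expn_mmE.
have := ltn_pmod r mm_gt0; case: h => /= lt_rm.
  by rewrite mul1n muln2 -addnn addnC ltn_add2r.
by rewrite mul0n add0n (leq_trans lt_rm) // leq_pmulr.
Qed.

Lemma hi_pack h r : hi (pack h r) = h.
Proof.
rewrite /hi /pack; have := ltn_pmod r mm_gt0.
by case: h => /= lt_rm; rewrite ?mul1n ?leq_addr // mul0n add0n leqNgt lt_rm.
Qed.

Lemma odd_pack h r : odd (pack h r) = odd r.
Proof. by rewrite /pack oddD oddM odd_mm andbF odd_mod // odd_mm. Qed.

Lemma res_pack h r : ((pack h r)%:R = r%:R :> 'Z_m)%R.
Proof.
by rewrite /pack natrD natrM pchar_Zp ?mm_gt1 // mulr0 add0r Zp_nat_mod ?mm_gt1.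
Qed.

Lemma packK x : inG n x -> pack (hi x) x = x.
Proof.
rewrite /inG /pack /hi expn_mmE => lt_x; case: leqP => [le_mx|lt_xm].
  rewrite mul1n -[in RHS](subnK le_mx) addnC; congr (_ + _).
  by rewrite -[in LHS](subnK le_mx) modnDr modn_small // ltn_subLR // addnn -muln2.
by rewrite mul0n add0n modn_small.
Qed.

Lemma eq_hi_res x y : inG n x -> inG n y ->
  hi x = hi y -> (x%:R = y%:R :> 'Z_m)%R -> x = y.
Proof.
move=> Gx Gy hixy /(congr1 (fun z : 'Z_m => z : nat)); rewrite !val_Zp_nat ?mm_gt1 // => rxy.
by rewrite -(packK Gx) -(packK Gy) hixy /pack rxy.
Qed.

Definition twist (x y : nat) : bool := [&& hi x, ~~ odd x & odd y].

Definition halfm (e : bool) : 'Z_m := ((e * k)%:R)%R.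

Lemma halfmD e1 e2 : (halfm e1 + halfm e2)%R = halfm (e1 (+) e2).
Proof.
rewrite /halfm -natrD; case: e1; case: e2; rewrite /= ?mul1n ?mul0n ?addn0 //.
by rewrite addnn -muln2 -mm_halfE pchar_Zp ?mm_gt1.
Qed.

Lemma oplusE x y : inG n x -> inG n y ->
  oplus n x y = pack (hi x (+) hi y) (x + y + twist x y * k).
Proof.
rewrite /inG => Gx Gy.
rewrite /oplus /inEH /inOH /inOP /inH /inP /tt /ss /twist /pack /hi Gx Gy !ltnNge.
by case: (m <= x); case: (m <= y); case: (odd x); case: (odd y);
  rewrite /= ?mul1n ?mul0n ?addn0 ?add0n // addnC.
Qed.

Lemma AmapE x : inG n x -> Amap n x = pack (hi x) (x + odd x * k).
Proof.
rewrite /inG => Gx; case ox: (odd x); last first.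
  by rewrite /Amap /inOP /inOH ox !andbF mul0n addn0 packK.
rewrite /Amap /inOH /inOP /inH /inP /pack /hi ox Gx !andbT mul1n.
by case: ltnP; rewrite ?mul0n ?mul1n ?add0n // addnC.
Qed.

Lemma inME a b : inG n a -> inG n b ->
  inM n a b = [&& hi a || odd a, hi b || odd b & (hi a != hi b) || (odd a != odd b)].
Proof.
rewrite /inG => Ga Gb; rewrite /inM /inEH /inOH /inOP /inH /inP /hi Ga Gb !ltnNge.
by case: (m <= a); case: (m <= b); case: (odd a); case: (odd b).
Qed.

Section Elements.
Variables x y : nat.
Hypotheses (Gx : inG n x) (Gy : inG n y).

Lemma oplus_in : inG n (oplus n x y).
Proof. by rewrite oplusE ?pack_in. Qed.

Lemma hi_oplus : hi (oplus n x y) = hi x (+) hi y.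
Proof. by rewrite oplusE ?hi_pack. Qed.

Lemma odd_oplus : odd (oplus n x y) = odd x (+) odd y.
Proof. by rewrite oplusE // odd_pack !oddD oddM odd_half_mm andbF addbF. Qed.

Lemma res_oplus :
  ((oplus n x y)%:R = x%:R + y%:R + halfm (twist x y) :> 'Z_m)%R.
Proof. by rewrite oplusE // res_pack !natrD. Qed.

Lemma Amap_in : inG n (Amap n x).
Proof. by rewrite AmapE ?pack_in. Qed.

Lemma hi_Amap : hi (Amap n x) = hi x.
Proof. by rewrite AmapE ?hi_pack. Qed.

Lemma odd_Amap : odd (Amap n x) = odd x.
Proof. by rewrite AmapE // odd_pack oddD oddM odd_half_mm andbF addbF. Qed.

Lemma res_Amap : ((Amap n x)%:R = x%:R + halfm (odd x) :> 'Z_m)%R.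
Proof. by rewrite AmapE // res_pack natrD. Qed.

End Elements.

Section Gyrations.
Variables a b c : nat.
Hypothesis Gc : inG n c.

Lemma gyr_in : inG n (gyr n a b c).
Proof. by rewrite /gyr; case: inM => //; apply: Amap_in. Qed.

Lemma hi_gyr : hi (gyr n a b c) = hi c.
Proof. by rewrite /gyr; case: inM => //; apply: hi_Amap. Qed.

Lemma odd_gyr : odd (gyr n a b c) = odd c.
Proof. by rewrite /gyr; case: inM => //; apply: odd_Amap. Qed.

Lemma res_gyr : ((gyr n a b c)%:R = c%:R + halfm (inM n a b && odd c) :> 'Z_m)%R.
Proof.
by rewrite /gyr; case: inM => /=; [apply: res_Amap | rewrite /halfm mul0n addr0].
Qed.

End Gyrations.

Lemma hi0 : hi 0 = false.
Proof. by rewrite /hi leqNgt mm_gt0. Qed.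

Lemma inG0 : inG n 0.
Proof. exact: expn_gt0. Qed.

Lemma oplus0x x : inG n x -> oplus n 0 x = x.
Proof. by move=> Gx; rewrite oplusE ?inG0 // /twist hi0 add0n addn0 packK. Qed.

Lemma oplus_left_inverse a : inG n a -> exists2 b, inG n b & oplus n b a = 0.
Proof.
move=> Ga; set b := pack (hi a) (m - a %% m).
have le_am : a %% m <= m := ltnW (ltn_pmod a mm_gt0).
have odd_b : odd b = odd a by rewrite odd_pack oddB // odd_mm odd_mod ?odd_mm.
have twist_ba : twist b a = false by rewrite /twist odd_b; case: (odd a); rewrite ?andbF.
exists b; first exact: pack_in.
apply: eq_hi_res; rewrite ?oplus_in ?pack_in ?inG0 //.
  by rewrite hi_oplus ?pack_in // hi_pack addbb hi0.
rewrite res_oplus ?pack_in // res_pack twist_ba /halfm mul0n addr0.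
by rewrite natrB // pchar_Zp ?mm_gt1 // Zp_nat_mod ?mm_gt1 // sub0r addNr.
Qed.

Lemma Amap_involutive x : inG n x -> Amap n (Amap n x) = x.
Proof.
move=> Gx; apply: eq_hi_res => //; first exact/Amap_in/Amap_in.
  by rewrite !hi_Amap ?Amap_in.
by rewrite !res_Amap ?Amap_in // odd_Amap // -addrA halfmD addbb /halfm mul0n addr0.
Qed.

Lemma Amap_morph x y : inG n x -> inG n y ->
  Amap n (oplus n x y) = oplus n (Amap n x) (Amap n y).
Proof.
move=> Gx Gy; apply: eq_hi_res; rewrite ?Amap_in ?oplus_in ?Amap_in //.
  by rewrite hi_Amap ?oplus_in // !hi_oplus ?Amap_in // !hi_Amap.
rewrite res_Amap ?oplus_in // !res_oplus ?Amap_in // !res_Amap // odd_oplus // -halfmD.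
have -> : twist (Amap n x) (Amap n y) = twist x y by rewrite /twist !hi_Amap ?odd_Amap.
by rewrite [in RHS]addrACA [LHS]addrAC.
Qed.

Lemma gyr_aut a b : is_aut n (gyr n a b).
Proof.
rewrite /gyr; case: inM; split => //.
- exact: Amap_in.
- by move=> x y Gx Gy Axy; rewrite -(Amap_involutive Gx) Axy Amap_involutive.
- by move=> y Gy; exists (Amap n y); rewrite ?Amap_in ?Amap_involutive.
- exact: Amap_morph.
- by move=> y Gy; exists y.
Qed.

Section Associativity.
Variables a b c : nat.
Hypotheses (Ga : inG n a) (Gb : inG n b) (Gc : inG n c).

Lemma twist_cocycle :
  twist b c (+) twist a (oplus n b c)
  = twist a b (+) ((inM n a b && odd c) (+) twist (oplus n a b) (gyr n a b c)).
Proof.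
rewrite /twist !hi_oplus // !odd_oplus // odd_gyr // inME //.
by case: (hi a); case: (hi b); case: (odd a); case: (odd b); case: (odd c).
Qed.

Lemma oplus_gyroassoc :
  oplus n a (oplus n b c) = oplus n (oplus n a b) (gyr n a b c).
Proof.
have Gbc := oplus_in Gb Gc; have Gab := oplus_in Ga Gb; have Ggc := gyr_in a b Gc.
apply: eq_hi_res; rewrite ?oplus_in //.
  by rewrite !hi_oplus // hi_gyr // addbA.
rewrite !res_oplus // res_gyr //.
by rewrite -!addrA [(halfm (twist a b) + _)%R]addrCA !halfmD twist_cocycle.
Qed.

End Associativity.

Lemma gyr_left_loop a b : inG n a -> inG n b -> gyr n a b = gyr n (oplus n a b) b.
Proof.
move=> Ga Gb; rewrite /gyr !inME ?oplus_in // hi_oplus // odd_oplus //.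
by case: (hi a); case: (hi b); case: (odd a); case: (odd b).
Qed.

End G2Gyrogroup.

Theorem mainTheorem2 (n : nat) (hn : 3 <= n) :
  inG n 0 /\
  (forall x y, inG n x -> inG n y -> inG n (oplus n x y)) /\
  (forall x, inG n x -> oplus n 0 x = x) /\
  (forall a, inG n a -> exists2 b, inG n b & oplus n b a = 0) /\
  (forall a b, inG n a -> inG n b -> is_aut n (gyr n a b)) /\
  (forall a b c, inG n a -> inG n b -> inG n c ->
     oplus n a (oplus n b c) = oplus n (oplus n a b) (gyr n a b c)) /\
  (forall a b, inG n a -> inG n b ->
     gyr n a b = gyr n (oplus n a b) b).
Proof.
split; first exact: inG0.
split; first exact: oplus_in.
split; first exact: oplus0x.
split; first exact: oplus_left_inverse.
split; first by move=> a b _ _; apply: gyr_aut.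
split; first exact: oplus_gyroassoc.
exact: gyr_left_loop.
Qed.
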